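(* Let $X$ be a metric space and $Y$ be a uniformly locally finite metric space. Every uniformly finite-to-one coarse quotient map $f:X\to Y$ is uniformly coarsely finite-to-one, i.e. coarsely $n$-to-1 for some $n\in\mathbb N$.
   Context: U.l.f.: for every $r>0$, $\sup_{y}|B(y,r)|<\infty$. $f$ is uniformly finite-to-one if $\sup_{y\in Y}|f^{-1}(y)|<\infty$. Coarse quotient: $f$ is coarse ($\sup\{\partial(f(x),f(y)):d(x,y)\le t\}<\infty$ for all $t$) and there is $K>0$ such that for every $\varepsilon>0$ there is $\delta>0$ with $B(f(x),\varepsilon)\subset f(B(x,\delta))^K$ for all $x$ (closed balls, $A^K=\{y:\partial(y,A)\le K\}$). For $n\in\mathbb N$, $f$ is coarsely $n$-to-1 if for each $s>0$ there is $r>0$ such that for every $B\subset Y$ with $\mathrm{diam}(B)\le s$ there are $A_1,\dots,A_n\subset X$ with $\mathrm{diam}(A_i)\le r$ and $f^{-1}(B)\subset\bigcup_{i=1}^nA_i$. *)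

From Stdlib Require Import Reals List.
Open Scope R_scope.

Definition is_metric {X : Type} (d : X -> X -> R) : Prop :=
  (forall x y, 0 <= d x y) /\
  (forall x y, d x y = 0 <-> x = y) /\
  (forall x y, d x y = d y x) /\
  (forall x y z, d x z <= d x y + d y z).

Definition card_le {X : Type} (S : X -> Prop) (N : nat) : Prop :=
  exists l : list X, (length l <= N)%nat /\ forall z, S z -> In z l.

Definition ball {X : Type} (d : X -> X -> R) (x : X) (r : R) : X -> Prop :=
  fun z => d x z <= r.

Definition ulf {Y : Type} (dY : Y -> Y -> R) : Prop :=
  forall r, 0 < r -> exists N : nat, forall y, card_le (ball dY y r) N.

Definition unif_finite_to_one {X Y : Type} (f : X -> Y) : Prop :=
  exists N : nat, forall y, card_le (fun x => f x = y) N.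

Definition coarse {X Y : Type} (dX : X -> X -> R) (dY : Y -> Y -> R)
  (f : X -> Y) : Prop :=
  forall t, exists S, forall x x', dX x x' <= t -> dY (f x) (f x') <= S.

(* dist(y, A) <= K, i.e. inf_{a in A} d(y,a) <= K, written out *)
Definition dist_set_le {Y : Type} (dY : Y -> Y -> R) (y : Y) (A : Y -> Prop)
  (K : R) : Prop :=
  forall e, 0 < e -> exists a, A a /\ dY y a < K + e.

Definition coarse_quotient {X Y : Type} (dX : X -> X -> R) (dY : Y -> Y -> R)
  (f : X -> Y) : Prop :=
  coarse dX dY f /\
  exists K, 0 < K /\
    forall eps, 0 < eps -> exists delta, 0 < delta /\
      forall x y, ball dY (f x) eps y ->
        dist_set_le dY y (fun y' => exists x', ball dX x delta x' /\ y' = f x') K.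

Definition diam_le {X : Type} (d : X -> X -> R) (B : X -> Prop) (s : R) : Prop :=
  forall a b, B a -> B b -> d a b <= s.

Definition coarsely_n_to_1 {X Y : Type} (dX : X -> X -> R) (dY : Y -> Y -> R)
  (f : X -> Y) (n : nat) : Prop :=
  forall s, 0 < s -> exists r, 0 < r /\
    forall B : Y -> Prop, diam_le dY B s ->
      exists A : nat -> X -> Prop,
        (forall i, (i < n)%nat -> diam_le dX (A i) r) /\
        (forall x, B (f x) -> exists i, (i < n)%nat /\ A i x).

From Stdlib Require Import Reals Lra Lia List Classical.
Open Scope R_scope.

(* Let M bound the size of (K+1)-balls of Y (ulf) and N the size
   of fibres of f.  Given s > 0, the coarse quotient property yields delta > 0
   such that every point of Y within s of f x is within K+1 of f x' for some x'
   with d(x, x') <= delta.  If B has diameter <= s and f x0 lies in B, then every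
   x with f x in B is delta-close to a point x' with f x' in the (K+1)-ball around
   f x0; the preimage of that ball has at most M*N points.  Hence f^{-1}(B) is
   covered by at most M*N closed delta-balls, i.e. by M*N sets of diameter
   <= 2 delta, and f is coarsely (M*N)-to-1.
   The file proves: covering by balls around a finite list of centres; the
   cardinality bound for preimages; the lifting property of coarse quotient
   maps; the existence of a finite delta-net of f^{-1}(B); then the theorem. *)

Section CenteredBalls.

Variables (X : Type) (d : X -> X -> R).
Hypothesis d_metric : is_metric d.

(* The i-th closed r-ball around the i-th point of L (empty if i >= |L|). *)
Definition centered_balls (L : list X) (r : R) : nat -> X -> Prop :=
  fun i x => exists z, nth_error L i = Some z /\ d z x <= r.

Lemma centered_balls_diam (L : list X) (r : R) (i : nat) :
  diam_le d (centered_balls L r i) (2 * r).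
Proof.
  destruct d_metric as [_ [_ [d_sym d_tri]]].
  intros a b [z [Hz Ha]] [z' [Hz' Hb]].
  rewrite Hz in Hz'; injection Hz' as <-.
  pose proof (d_tri a z b) as Htri; rewrite (d_sym a z) in Htri; lra.
Qed.

Lemma cover_by_centered_balls (P : X -> Prop) (L : list X) (r : R) (n : nat) :
  (length L <= n)%nat ->
  (forall x, P x -> exists z, In z L /\ d z x <= r) ->
  exists A : nat -> X -> Prop,
    (forall i, (i < n)%nat -> diam_le d (A i) (2 * r)) /\
    (forall x, P x -> exists i, (i < n)%nat /\ A i x).
Proof.
  intros HL Hnet. exists (centered_balls L r). split.
  - intros i _. apply centered_balls_diam.
  - intros x Hx. destruct (Hnet x Hx) as [z [Hz Hzx]].
    destruct (In_nth_error _ _ Hz) as [i Hi].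
    assert (Hlt : (i < length L)%nat)
      by (apply nth_error_Some; congruence).
    exists i. split; [lia | exists z; auto].
Qed.

End CenteredBalls.

Lemma preimage_card_le {X Y : Type} (f : X -> Y) (N : nat)
  (HN : forall y, card_le (fun x => f x = y) N) (S : Y -> Prop) (M : nat) :
  card_le S M -> card_le (fun x => S (f x)) (M * N).
Proof.
  intros [l [Hl Hin]].
  assert (Hlist : forall l : list Y, exists L : list X,
    (length L <= length l * N)%nat /\ forall x, In (f x) l -> In x L).
  { clear - HN. intro l. induction l as [|y l IH].
    - exists nil. split; [simpl; lia | intros x []].
    - destruct IH as [L2 [HL2 HinL2]]. destruct (HN y) as [L1 [HL1 HinL1]].
      exists (L1 ++ L2). split.
      + rewrite length_app. simpl. lia.
      + intros x [Hx | Hx]; apply in_or_app; auto. }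
  destruct (Hlist l) as [L [HL HinL]]. exists L. split.
  - pose proof (Nat.mul_le_mono_r _ _ N Hl). lia.
  - intros x Hx. apply HinL, Hin, Hx.
Qed.

Lemma coarse_quotient_lift {X Y : Type} (dX : X -> X -> R) (dY : Y -> Y -> R)
  (f : X -> Y) (K eps delta : R) :
  (forall x y, ball dY (f x) eps y ->
     dist_set_le dY y (fun y' => exists x', ball dX x delta x' /\ y' = f x') K) ->
  forall x y, dY (f x) y <= eps ->
    exists x', dX x x' <= delta /\ dY y (f x') <= K + 1.
Proof.
  intros Hq x y Hxy.
  destruct (Hq x y Hxy 1 Rlt_0_1) as [a [[x' [Hx' ->]] Ha]].
  exists x'. split; [exact Hx' | lra].
Qed.

Lemma preimage_net {X Y : Type} (dX : X -> X -> R) (dY : Y -> Y -> R)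
  (f : X -> Y) (K s delta : R) (M N : nat) :
  is_metric dX ->
  (forall y, card_le (ball dY y (K + 1)) M) ->
  (forall y, card_le (fun x => f x = y) N) ->
  (forall x y, ball dY (f x) s y ->
     dist_set_le dY y (fun y' => exists x', ball dX x delta x' /\ y' = f x') K) ->
  forall B : Y -> Prop, diam_le dY B s ->
    exists L : list X, (length L <= M * N)%nat /\
      forall x, B (f x) -> exists z, In z L /\ dX z x <= delta.
Proof.
  intros [_ [_ [dX_sym _]]] HM HN Hq B HB.
  destruct (classic (exists x0, B (f x0))) as [[x0 Hx0] | Hempty].
  - destruct (preimage_card_le f N HN _ M (HM (f x0))) as [L [HL HinL]].
    exists L. split; [exact HL |].
    intros x Hx.
    destruct (coarse_quotient_lift dX dY f K s delta Hq x (f x0) (HB _ _ Hx Hx0))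
      as [x' [Hxx' Hx0x']].
    exists x'. split; [apply HinL, Hx0x' | rewrite dX_sym; exact Hxx'].
  - exists nil. split; [simpl; lia |].
    intros x Hx. exfalso. apply Hempty. eauto.
Qed.

Theorem proposition3p3 (X Y : Type) (dX : X -> X -> R) (dY : Y -> Y -> R)
  (f : X -> Y) :
  is_metric dX -> is_metric dY -> ulf dY ->
  unif_finite_to_one f -> coarse_quotient dX dY f ->
  exists n : nat, coarsely_n_to_1 dX dY f n.
Proof.
  intros HdX _ Hulf [N HN] [_ [K [HK Hq]]].
  destruct (Hulf (K + 1)) as [M HM]; [lra |].
  exists (M * N)%nat. intros s Hs.
  destruct (Hq s Hs) as [delta [Hdelta Hlift]].
  exists (2 * delta). split; [lra |]. intros B HB.
  destruct (preimage_net dX dY f K s delta M N HdX HM HN Hlift B HB)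
    as [L [HL Hnet]].
  exact (cover_by_centered_balls X dX HdX (fun x => B (f x)) L delta _ HL Hnet).
Qed.
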